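(* Let $G$ be a graph whose vertex set $V(G)$ is partitioned into an independent set $S$ and a clique $K$ (so $G$ is a split graph). Suppose that for any three distinct vertices $u,v,w\in S$ there exist two distinct vertices $x,y\in\{u,v,w\}$ with $N_G(x)\supseteq N_G(y)$. Then $G$ is an interval graph.
   Context: All graphs are finite, simple and undirected. $N_G(v)$ denotes the set of neighbors of $v$ in $G$. An interval graph is the intersection graph of a finite family of closed intervals on the real line. *)

From Stdlib Require Import Reals.
From mathcomp Require Import all_boot.
Set Implicit Arguments. Unset Strict Implicit. Unset Printing Implicit Defensive.

Definition simple_graph (T : finType) (e : rel T) : Prop :=
  symmetric e /\ irreflexive e.

Definition nbhd (T : finType) (e : rel T) (v : T) : {set T} := [set w | e v w].

Definition interval_graph (T : finType) (e : rel T) : Prop :=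
  exists (l r : T -> R),
    (forall v, Rle (l v) (r v)) /\
    (forall u v, u != v ->
       (e u v <-> exists x : R,
          (Rle (l u) x /\ Rle x (r u)) /\ (Rle (l v) x /\ Rle x (r v)))).

From Stdlib Require Import Reals Lra.
From mathcomp Require Import all_boot.
Set Implicit Arguments. Unset Strict Implicit. Unset Printing Implicit Defensive.

(* The neighbourhoods of the vertices of S are subsets of K in which any three
   contain a nested pair, so S splits into two chains for inclusion (the
   width-2 case of Dilworth's theorem).  Put the vertices of one chain at
   distinct negative points and those of the other at distinct positive
   points, nearer to 0 the larger their neighbourhood.  A clique vertex k gets
   an interval around 0 reaching exactly the farthest neighbour of k on each
   side; as the neighbourhoods along a chain grow towards 0, this interval
   meets precisely the neighbours of k, and all clique intervals share 0. *)

Definition nested (U : finType) (A B : {set U}) := (A \subset B) || (B \subset A).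

Lemma nestedC (U : finType) (A B : {set U}) : nested A B = nested B A.
Proof. by rewrite /nested orbC. Qed.

Lemma nested_refl (U : finType) (A : {set U}) : nested A A.
Proof. by rewrite /nested subxx. Qed.

Section TwoChains.

Variables (T U : finType) (f : T -> {set U}).

Definition triple_has_nested_pair (S : {set T}) :=
  {in S & &, forall x y z,
    [|| nested (f x) (f y), nested (f y) (f z) | nested (f x) (f z)]}.

Definition chain_colouring (S : {set T}) (c : T -> bool) :=
  {in S &, forall x y, c x = c y -> nested (f x) (f y)}.

Lemma triple_has_nested_pair_distinct (S : {set T}) :
  (forall u v w, u \in S -> v \in S -> w \in S -> u != v -> v != w -> u != w ->
     exists x y, x \in [:: u; v; w] /\ y \in [:: u; v; w] /\ x != y /\
                 f y \subset f x) ->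
  triple_has_nested_pair S.
Proof.
move=> pair u v w uS vS wS.
have [->|uv] := eqVneq u v; first by rewrite nested_refl.
have [->|vw] := eqVneq v w; first by rewrite nested_refl orbT.
have [->|uw] := eqVneq u w; first by rewrite nested_refl !orbT.
have [x [y [xuvw [yuvw [xy yx]]]]] := pair u v w uS vS wS uv vw uw.
have nxy : nested (f x) (f y) by rewrite /nested yx orbT.
move: xuvw yuvw xy nxy; rewrite !inE /nested.
by move=> /or3P[]/eqP-> /or3P[]/eqP->; rewrite ?eqxx // => _ /orP[]->; rewrite ?orbT.
Qed.

Lemma chain_colouring_extend (S : {set T}) x c' :
  triple_has_nested_pair S -> x \in S -> (forall y, y \in S -> #|f y| <= #|f x|) ->
  chain_colouring (S :\ x) c' -> exists c, chain_colouring S c.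
Proof.
move=> S_triple xS xmax c'chain.
have sub_x y : y \in S -> nested (f x) (f y) -> f y \subset f x.
  move=> yS /orP[xy|//]; suff -> : f y = f x by [].
  by apply/esym/eqP; rewrite eqEcard xy xmax.
pose I := [set y in S :\ x | ~~ nested (f x) (f y)].
have I_chain : {in I &, forall y z, nested (f y) (f z)}.
  move=> y z; rewrite !inE => /andP[/andP[_ yS] xy] /andP[/andP[_ zS] xz].
  by move: (S_triple x y z xS yS zS); rewrite (negbTE xy) (negbTE xz) orbF.
have [b cross] : exists b, forall a y, a \in S :\ x -> a \notin I -> c' a = b ->
    y \in I -> f a \subset f y.
  (* With m of least size in I, colour b := c' m works: a vertex of colour b
     outside I lies below x, so it cannot contain m and hence lies below m. *)
  have [I0 | [y0 y0I]] := set_0Vmem I; first by exists true => a y _ _ _; rewrite I0 inE.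
  have [m mI mmin] := arg_minnP (fun y => #|f y|) y0I.
  have {}mI : m \in I := mI.
  have m_sub y : y \in I -> f m \subset f y.
    move=> yI; case/orP: (I_chain m y mI yI) => // ym.
    have /eqP -> : f y == f m by rewrite eqEcard ym mmin.
    exact: subxx.
  exists (c' m) => a y aSx aI cam yI.
  have aS : a \in S by move: aSx; rewrite [a \in S :\ x]inE => /andP[].
  have ax : f a \subset f x by apply: sub_x aS _; move: aI; rewrite inE aSx negbK.
  have mSx : m \in S :\ x by move: mI; rewrite [m \in I]inE => /andP[].
  case/orP: (c'chain a m aSx mSx cam) => [am|ma]; first exact: subset_trans am (m_sub y yI).
  by move: mI; rewrite inE /nested (subset_trans ma ax) orbT andbF.
exists (fun y => if y == x then ~~ b else if y \in I then b else c' y) => y z yS zS.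
have out_I v : v \in S -> v != x -> v \notin I -> nested (f x) (f v).
  by move=> vS vx; rewrite !inE vx vS negbK.
have Sx v : v \in S -> v != x -> v \in S :\ x by move=> vS vx; rewrite !inE vx.
case: (eqVneq y x) => [->|yx]; case: (eqVneq z x) => [->|zx] /=.
- by rewrite nested_refl.
- case: ifP => [_ | zI _]; first by case: (b).
  by apply: out_I => //; rewrite zI.
- case: ifP => [_ | yI _]; first by case: (b).
  by rewrite nestedC; apply: out_I => //; rewrite yI.
case: ifP => yI; case: ifP => zI.
- by move=> _; exact: I_chain.
- by move/esym=> zb; rewrite nestedC /nested (cross z y) ?Sx ?zI.
- by move=> yb; rewrite /nested (cross y z) ?Sx ?yI.
- by apply: c'chain; apply: Sx.
Qed.

Lemma two_chain_cover (S : {set T}) :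
  triple_has_nested_pair S -> exists c, chain_colouring S c.
Proof.
move: {2}#|S| (leqnn #|S|) => n; elim: n S => [|n IH] S S_le S_triple.
  by move: S_le; rewrite leqn0 => /eqP/cards0_eq ->; exists xpredT => x; rewrite inE.
have [-> | [x0 x0S]] := set_0Vmem S; first by exists xpredT => x; rewrite inE.
have [x xS xmax] := arg_maxnP (fun y => #|f y|) x0S.
have {}xS : x \in S := xS.
have [||c' c'chain] := IH (S :\ x).
- by rewrite -ltnS (leq_trans _ S_le) // (cardsD1 x S) xS.
- by move=> a b d /setD1P[_ aS] /setD1P[_ bS] /setD1P[_ dS]; apply: S_triple.
exact: chain_colouring_extend S_triple xS xmax c'chain.
Qed.

End TwoChains.

Lemma exists_rank_antitone (T : finType) (w : T -> nat) :
  exists q : T -> nat, injective q /\ forall x y, w x < w y -> q y < q x.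
Proof.
pose leT := [rel x y : T | w y <= w x].
pose s := sort leT (enum T).
have s_sorted : sorted leT s by apply: sort_sorted => x y; apply: leq_total.
have mem_s x : x \in s by rewrite mem_sort mem_enum.
exists (index ^~ s); split=> [x y|x y]; first exact: index_inj.
rewrite ltnNge => wyx; rewrite ltnNge; apply: contra wyx.
have leT_trans : transitive leT by move=> a b d /= ba db; apply: leq_trans db ba.
by apply: (sorted_leq_index leT_trans _ s_sorted) => // a /=.
Qed.

Lemma intervals_meetP (a b a' b' : R) : Rle a b -> Rle a' b' ->
  (exists x, (Rle a x /\ Rle x b) /\ (Rle a' x /\ Rle x b')) <-> Rle a b' /\ Rle a' b.
Proof.
move=> ab ab'; split=> [[x]|[ab'' a'b]]; first lra.
by exists (Rmax a a'); rewrite /Rmax; case: Rle_dec; lra.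
Qed.

Section SplitIntervalModel.

Variables (T : finType) (e : rel T) (S : {set T}) (c : T -> bool) (q : T -> nat).
Hypothesis e_sym : symmetric e.
Hypothesis c_chain : chain_colouring (nbhd e) S c.
Hypothesis q_inj : injective q.
Hypothesis q_anti : forall x y, #|nbhd e x| < #|nbhd e y| -> q y < q x.

Definition reach b k := \max_(s in S | (c s == b) && e k s) (q s).+1.

Lemma adj_reach k s : s \in S -> e k s = ((q s).+1 <= reach (c s) k).
Proof.
move=> sS; apply/idP/idP => [eks|].
  by apply: leq_bigmax_cond; rewrite sS eqxx eks.
apply: contraLR => neks; rewrite -ltnNge ltnS.
apply/bigmax_leqP => s' /andP[s'S /andP[/eqP cs's eks']].
have ks' : k \in nbhd e s' by rewrite inE e_sym.
have ks : k \notin nbhd e s by rewrite inE e_sym.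
have s'_sub : ~~ (nbhd e s' \subset nbhd e s).
  by apply/negP => /subsetP/(_ k ks'); apply/negP.
apply: q_anti; apply: proper_card; rewrite properE s'_sub andbT.
by case/orP: (c_chain sS s'S (esym cs's)) => //; rewrite (negbTE s'_sub).
Qed.

Definition point s : R := if c s then Ropp (INR (q s).+1) else INR (q s).+1.

Definition lo v := if v \in S then point v else Ropp (INR (reach true v)).
Definition hi v := if v \in S then point v else INR (reach false v).

Lemma point_inj : injective point.
Proof.
move=> u v; rewrite /point.
have := lt_0_INR (q u).+1 (Nat.lt_0_succ _); have := lt_0_INR (q v).+1 (Nat.lt_0_succ _).
have uv : INR (q u).+1 = INR (q v).+1 -> u = v by move/INR_eq => [/q_inj].
by case: (c u); case: (c v) => ?? E; apply: uv; lra.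
Qed.

Lemma reach_point k s :
  (q s).+1 <= reach (c s) k <->
  Rle (Ropp (INR (reach true k))) (point s) /\ Rle (point s) (INR (reach false k)).
Proof.
have := pos_INR (reach true k); have := pos_INR (reach false k).
have := lt_0_INR (q s).+1 (Nat.lt_0_succ _).
rewrite /point; case: (c s) => ???; split.
- by move/leP/le_INR; lra.
- by case=> ? _; apply/leP/INR_le; lra.
- by move/leP/le_INR; lra.
- by case=> _ ?; apply/leP/INR_le; lra.
Qed.

Lemma split_interval_graph :
  (forall u v, u \in S -> v \in S -> ~~ e u v) ->
  (forall u v, u \notin S -> v \notin S -> u != v -> e u v) ->
  interval_graph e.
Proof.
move=> S_indep K_clique.
have lo_hi v : Rle (lo v) (hi v).
  rewrite /lo /hi; case: (v \in S); first exact: Rle_refl.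
  by have := pos_INR (reach true v); have := pos_INR (reach false v); lra.
have mixed k s : k \notin S -> s \in S -> e k s <->
    exists x, (Rle (lo k) x /\ Rle x (hi k)) /\ (Rle (lo s) x /\ Rle x (hi s)).
  move=> kS sS; rewrite intervals_meetP // adj_reach // reach_point.
  by rewrite /lo /hi (negbTE kS) sS; split; case.
exists lo, hi; split=> // u v uv; rewrite intervals_meetP //.
case uS: (u \in S); case vS: (v \in S).
- split=> [euv|]; first by move: (S_indep u v uS vS); rewrite euv.
  rewrite /lo /hi uS vS => ?; case/eqP: uv; apply: point_inj; lra.
- by rewrite e_sym -intervals_meetP // (mixed v u) ?vS //; split; case=> x []; exists x.
- by rewrite -intervals_meetP // (mixed u v) ?uS.
- rewrite K_clique ?uS ?vS //; split=> // _; rewrite /lo /hi uS vS.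
  have := pos_INR (reach true u); have := pos_INR (reach false u).
  have := pos_INR (reach true v); have := pos_INR (reach false v); lra.
Qed.

End SplitIntervalModel.

Theorem lemma2p3 (T : finType) (e : rel T) (S K : {set T}) :
  simple_graph e ->
  S :&: K = set0 ->
  S :|: K = [set: T] ->
  (forall u v, u \in S -> v \in S -> ~~ e u v) ->
  (forall u v, u \in K -> v \in K -> u != v -> e u v) ->
  (forall u v w, u \in S -> v \in S -> w \in S ->
     u != v -> v != w -> u != w ->
     exists x y, x \in [:: u; v; w] /\ y \in [:: u; v; w] /\ x != y /\
                 nbhd e y \subset nbhd e x) ->
  interval_graph e.
Proof.
move=> [e_sym _] _ SK S_indep K_clique triples.
have inK x : x \notin S -> x \in K.
  by move=> xS; move: (in_setT x); rewrite -SK inE (negbTE xS).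
have co_S_clique u v : u \notin S -> v \notin S -> u != v -> e u v.
  by move=> /inK uK /inK vK; apply: K_clique.
have [c c_chain] := two_chain_cover (triple_has_nested_pair_distinct triples).
have [q [q_inj q_anti]] := exists_rank_antitone (fun v => #|nbhd e v|).
exact: split_interval_graph e_sym c_chain q_inj q_anti S_indep co_S_clique.
Qed.
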